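(* Let $(K,d)$ be a compact metric space, let $\gamma=(\gamma_1,\dots,\gamma_n)$ be a system of proper contractions on $K$ such that $K=\bigcup_{i=1}^n\gamma_i(K)$, and let $\varphi:K\to K$ be continuous with $\varphi(\gamma_i(x))=x$ for all $x\in K$ and $i=1,\dots,n$. Assume that $\gamma$ satisfies the open set condition in $K$. Let $A=C(K)$ and let $X=C(K)$ be the Hilbert bimodule over $A$ described in the context, with left action $\phi$. Then for every $a\in J(X)^0$ there exist $m\ge 1$ and $\xi_1,\dots,\xi_m,\eta_1,\dots,\eta_m\in X$ such that \[\sum_{i=1}^m\theta_{\xi_i,\eta_i}=\phi(a).\]
   Context: A continuous map $g:K\to K$ is a proper contraction if there are constants $0<c_1\le c_2<1$ with $c_1d(x,y)\le d(g(x),g(y))\le c_2 d(x,y)$ for all $x,y\in K$. The system $\gamma$ satisfies the open set condition in $K$ if there is a non-empty open set $V\subset K$ with $\bigcup_{i=1}^n\gamma_i(V)\subset V$ and $\gamma_i(V)\cap\gamma_j(V)=\emptyset$ for $i\ne j$. Let $B_\gamma=\{y\in K: y=\gamma_i(x)=\gamma_j(x)\text{ for some }x\in K\text{ and some }i\neq j\}$. The $A$-$A$ bimodule structure on $X=C(K)$ is $(a\cdot\xi\cdot b)(x)=a(x)\xi(x)b(\varphi(x))$ for $a,b\in A$, $\xi\in X$, with $A$-valued inner product $\langle\xi,\eta\rangle_A(x)=\frac1n\sum_{i=1}^n\overline{\xi(\gamma_i(x))}\eta(\gamma_i(x))$; this makes $X$ a Hilbert bimodule (C$^*$-correspondence)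 over $A$. The left action $\phi:A\to\mathcal L(X)$ is $(\phi(a)\xi)(x)=a(x)\xi(x)$. For $\xi,\eta\in X$, $\theta_{\xi,\eta}$ is the operator $\zeta\mapsto\xi\cdot\langle\eta,\zeta\rangle_A$ on $X$. $J(X)^0$ is the set of $a\in A$ that vanish on $B_\gamma$ and whose support is a compact subset of $K\setminus B_\gamma$. *)

From HB Require Import structures.
From mathcomp Require Import all_boot all_order all_algebra.
From mathcomp Require Import all_classical all_reals all_analysis.
From mathcomp Require Import complex.
Set Implicit Arguments. Unset Strict Implicit. Unset Printing Implicit Defensive.
Import Order.TTheory GRing.Theory Num.Theory numFieldTopology.Exports.
Local Open Scope classical_set_scope.
Local Open Scope ring_scope.
Local Open Scope complex_scope.

Section Defs.
Context {R : realType} {K : metricType R}.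

Definition proper_contraction (g : K -> K) : Prop :=
  continuous g /\
  exists c1 c2 : R, [/\ 0 < c1, c1 <= c2, c2 < 1 &
    forall x y, c1 * mdist x y <= mdist (g x) (g y) /\
                mdist (g x) (g y) <= c2 * mdist x y].

Definition open_set_condition (n : nat) (gam : 'I_n -> K -> K) : Prop :=
  exists V : set K, [/\ open V, V !=set0,
    (forall i, gam i @` V `<=` V) &
    (forall i j, i != j -> gam i @` V `&` gam j @` V = set0)].

Definition B_gamma (n : nat) (gam : 'I_n -> K -> K) : set K :=
  [set y | exists x i j, [/\ i != j, y = gam i x & y = gam j x]].

(* continuity of a complex-valued function (C = R^2 with product topology) *)
Definition contC (f : K -> R[i]) : Prop :=
  continuous (fun x => complex.Re (f x)) /\ continuous (fun x => complex.Im (f x)).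

Definition supp (a : K -> R[i]) : set K := closure [set x | a x != 0].

Definition J0 (n : nat) (gam : 'I_n -> K -> K) (a : K -> R[i]) : Prop :=
  [/\ contC a, (forall y, B_gamma gam y -> a y = 0),
      compact (supp a) & supp a `<=` ~` B_gamma gam].

Definition innerA (n : nat) (gam : 'I_n -> K -> K) (xi eta : K -> R[i]) : K -> R[i] :=
  fun x => (n%:R)^-1 * \sum_(i < n) (xi (gam i x))^* * eta (gam i x).

Definition ractX (phi : K -> K) (xi b : K -> R[i]) : K -> R[i] :=
  fun x => xi x * b (phi x).

Definition lactX (a xi : K -> R[i]) : K -> R[i] := fun x => a x * xi x.

Definition theta (n : nat) (gam : 'I_n -> K -> K) (phi : K -> K)
  (xi eta : K -> R[i]) (zeta : K -> R[i]) : K -> R[i] :=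
  ractX phi xi (innerA gam eta zeta).

End Defs.

From HB Require Import structures.
From mathcomp Require Import all_boot all_order all_algebra.
From mathcomp Require Import all_classical all_reals all_analysis.
From mathcomp Require Import complex.
From mathcomp Require Import ring lra.
Set Implicit Arguments. Unset Strict Implicit. Unset Printing Implicit Defensive.
Import Order.TTheory GRing.Theory Num.Theory numFieldTopology.Exports.
Local Open Scope classical_set_scope.
Local Open Scope ring_scope.
Local Open Scope complex_scope.

(* For x in the compact set supp a, which avoids B_gamma, exactly one of the
   points gam_i (phi x) equals x, and compactness yields e > 0 bounding the
   distance from x to all the other ones.  Pick a finite (e/3)-net c_k, let p_k
   be the partition of unity subordinate to the balls B(c_k, e/3) built from
   tent functions, and g_k a continuous function equal to 1 on B(c_k, e/3) and
   to 0 off B(c_k, 2e/3).  The kernel sum_k p_k(x) g_k(y) is then 1 on the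
   diagonal and 0 as soon as d(x, y) >= e, so with xi_k = n a p_k and
   eta_k = g_k the operator sum_k theta_{xi_k, eta_k} sends zeta to
   x |-> a(x) zeta(x). *)

Section compact_lbound.
Context {R : realType} {T : topologicalType}.

Lemma compact_continuous_gt0_lbound (I : finType) (P : pred I) (S : set T)
    (G : I -> T -> R) :
  compact S -> (forall i, P i -> continuous (G i)) ->
  (forall i x, P i -> S x -> 0 < G i x) ->
  exists2 e, 0 < e & forall i x, P i -> S x -> e <= G i x.
Proof.
move=> cS Gc G_gt0.
have lbound i : exists e, 0 < e /\ (P i -> forall x, S x -> e <= G i x).
  have [Pi|] := boolP (P i); last by exists 1.
  have [S0|noS] := pselect (S !=set0); last first.
    by exists 1; split=> // _ x Sx; case: noS; exists x.
  have Gic : {within S, continuous G i}.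
    by apply: continuous_subspaceT; exact: Gc.
  have [c /set_mem Sc minc] := compact_EVT_min S0 cS Gic.
  by exists (G i c); split=> [|_ x Sx]; [exact: G_gt0 | apply/minc/mem_set].
have /choice[e he] := lbound.
exists (\big[Num.min/1]_(i | P i) e i).
  by apply/bigmin_gtP; split=> // i _; case: (he i).
by move=> i x Pi Sx; exact: bigmin_inf Pi ((he i).2 Pi x Sx).
Qed.

End compact_lbound.

Section metric.
Context {R : realType} {T : topologicalType} {K : metricType R}.

Lemma continuous_mdist (f g : T -> K) : continuous f -> continuous g ->
  continuous (fun x => mdist (f x) (g x)).
Proof.
move=> cf cg x; apply/cvgrPdist_lt => e e0.
have e2_gt0 : 0 < e / 2 by rewrite divr_gt0.
have f_near := metricType_numDomainType.cvgr_dist_lt (cf x) e2_gt0.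
have g_near := metricType_numDomainType.cvgr_dist_lt (cg x) e2_gt0.
near=> t.
have dfx : mdist (f x) (f t) < e / 2 by near: t; apply: f_near.
have dgx : mdist (g x) (g t) < e / 2 by near: t; apply: g_near.
have := metric_triangle (f x) (f t) (g x).
have := metric_triangle (f t) (g t) (g x).
have := metric_triangle (f t) (f x) (g t).
have := metric_triangle (f x) (g x) (g t).
rewrite (metric_sym (g t) (g x)) (metric_sym (f t) (f x)).
rewrite ltr_distl; lra.
Unshelve. all: end_near.
Qed.

Definition seq_totally : set_system (seq K) :=
  filter_from [set: seq K]
    (fun s0 : seq K => [set s : seq K | {subset s0 <= s}]).

Instance seq_totally_filter : Filter seq_totally.
Proof.
apply: filter_fromT_filter; first by exists [::].
by move=> s1 s2; exists (s1 ++ s2) => s /= sub;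
  split=> y y_in; apply: sub; rewrite mem_cat y_in ?orbT.
Qed.

Lemma compact_ball_net (r : R) : 0 < r -> compact [set: K] ->
  exists m (c : 'I_m -> K), forall x, exists k, mdist (c k) x < r.
Proof.
move=> r_gt0 /compact_near_coveringP/(_ _ seq_totally
  (fun s x => exists2 c, c \in s & mdist c x < r) _) [x _|s0 _ s0_net].
- near=> y s.
  have xy : mdist x y < r.
    by near: y; have := nbhsx_ballx x r r_gt0; rewrite ballEmdist.
  have xs : x \in s by near: s; exists [:: x] => // s /=; apply; rewrite inE.
  by exists x.
- exists (size s0), (tnth (in_tuple s0)) => x.
  have [c c_in cx] := s0_net s0 (fun _ => id) x I.
  by have /tnthP[k ck] : c \in in_tuple s0 by []; exists k; rewrite -ck.
Unshelve. all: end_near.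
Qed.

End metric.

Section tent.
Context {R : realType} {K : metricType R}.
Implicit Types (c x : K) (r : R).

Definition tent c r x : R := Num.max 0 (r - mdist c x).

Definition plateau c r x : R := Num.min 1 (tent c (2 * r) x / r).

Lemma tent_eq0 c r x : r <= mdist c x -> tent c r x = 0.
Proof. by move=> le_r_d; apply/max_idPl; rewrite subr_le0. Qed.

Lemma tent_gt0 c r x : (0 < tent c r x) = (mdist c x < r).
Proof. by rewrite lt_max ltxx subr_gt0. Qed.

Lemma continuous_tent c r : continuous (tent c r).
Proof.
move=> x; apply: (@continuous_max _ _ (fun=> 0) (fun y => r - mdist c y)).
  exact: cst_continuous.
have d_cont : continuous (mdist c).
  apply: (@continuous_mdist _ _ _ (fun=> c) id) => [|y]; last exact: cvg_id.
  exact: cst_continuous.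
by apply: continuousB; [exact: cst_continuous | exact: d_cont].
Qed.

Lemma plateau_eq1 c r x : 0 < r -> mdist c x <= r -> plateau c r x = 1.
Proof.
move=> r_gt0 le_d_r; apply/min_idPl.
by rewrite ler_pdivlMr // mul1r le_max; apply/orP; right; lra.
Qed.

Lemma plateau_eq0 c r x : 2 * r <= mdist c x -> plateau c r x = 0.
Proof.
by move=> le_2r_d; rewrite /plateau tent_eq0 // mul0r; apply/min_idPr.
Qed.

Lemma continuous_plateau c r : continuous (plateau c r).
Proof.
move=> x.
apply: (@continuous_min _ _ (fun=> 1) (fun y => tent c (2 * r) y / r)).
  exact: cst_continuous.
by apply: continuousM; [exact: continuous_tent | exact: cst_continuous].
Qed.

End tent.

Section localizing_partition_of_unity.
Context {R : realType} {K : metricType R}.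
Variables (r : R) (m : nat) (c : 'I_m -> K).
Hypotheses (r_gt0 : 0 < r) (c_net : forall x, exists k, mdist (c k) x < r).

Let tents x := \sum_(k < m) tent (c k) r x.

Let tents_neq0 x : tents x != 0.
Proof.
have [k ck] := c_net x; rewrite gt_eqF // /tents (bigD1 k) //=.
by rewrite ltr_pwDl ?tent_gt0 // sumr_ge0 // => i _; rewrite le_max lexx.
Qed.

Lemma localizing_partition_of_unity : exists p g : 'I_m -> K -> R,
  [/\ forall k, continuous (p k), forall k, continuous (g k),
      forall x, \sum_(k < m) p k x * g k x = 1 &
      forall x y, 3 * r <= mdist x y -> \sum_(k < m) p k x * g k y = 0].
Proof.
exists (fun k x => tent (c k) r x / tents x), (fun k => plateau (c k) r); split.
- move=> k x; apply: continuousM; first exact: continuous_tent.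
  apply: continuousV; first exact: tents_neq0.
  apply: continuous_big => [z|i _]; first exact: add_continuous.
  exact: continuous_tent.
- by move=> k; exact: continuous_plateau.
- move=> x; rewrite -[RHS](divff (tents_neq0 x)) /tents mulr_suml.
  apply: eq_bigr => k _; have [ck|ck] := ltP (mdist (c k) x) r.
    by rewrite plateau_eq1 ?mulr1 // ltW.
  by rewrite tent_eq0 // !mul0r.
- move=> x y le_3r_d; apply: big1 => k _; have [ck|ck] := ltP (mdist (c k) x) r.
    rewrite plateau_eq0 ?mulr0 //.
    by have := metric_triangle x (c k) y; rewrite (metric_sym x (c k)); lra.
  by rewrite tent_eq0 // !mul0r.
Qed.

End localizing_partition_of_unity.

Section contC.
Context {R : realType} {K : metricType R}.

Lemma contC_real (h : K -> R) : continuous h -> contC (fun x => (h x)%:C).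
Proof. by move=> h_cont; split=> //=; exact: cst_continuous. Qed.

Lemma contC_mul_real (u : K -> R[i]) (h : K -> R) :
  contC u -> continuous h -> contC (fun x => u x * (h x)%:C).
Proof.
move=> [Re_cont Im_cont] h_cont.
have ReM z t : complex.Re (z * t%:C) = complex.Re z * t.
  by case: z => a b /=; rewrite mulr0 subr0.
have ImM z t : complex.Im (z * t%:C) = complex.Im z * t.
  by case: z => a b /=; rewrite mulr0 add0r.
split; [under eq_fun do rewrite ReM | under eq_fun do rewrite ImM].
  by move=> x; exact: continuousM (Re_cont x) (h_cont x).
by move=> x; exact: continuousM (Im_cont x) (h_cont x).
Qed.

End contC.

Section self_similar.
Context {R : realType} {K : metricType R}.
Variables (n : nat) (gam : 'I_n -> K -> K) (phi : K -> K).

Lemma sum_theta_real (m : nat) (u : K -> R[i]) (p g : 'I_m -> K -> R)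
    (zeta : K -> R[i]) x : (0 < n)%N ->
  \sum_(k < m) theta gam phi (fun y => u y * (n%:R * p k y)%:C)
                             (fun y => (g k y)%:C) zeta x =
  u x * \sum_(i < n) zeta (gam i (phi x)) *
                     (\sum_(k < m) p k x * g k (gam i (phi x)))%:C.
Proof.
move=> n_gt0; rewrite /theta /ractX /innerA.
have n_neq0 : (n%:R : R[i]) != 0 by rewrite pnatr_eq0 -lt0n.
have conj_real t : Num.conj (t%:C) = t%:C :> R[i].
  by rewrite conj_Creal // complex_real.
transitivity (\sum_(k < m) u x *
    \sum_(i < n) zeta (gam i (phi x)) * (p k x * g k (gam i (phi x)))%:C).
  apply: eq_bigr => k _; rewrite rmorphM rmorph_nat !mulr_sumr.
  by apply: eq_bigr => i _; rewrite conj_real rmorphM; field.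
rewrite -mulr_sumr exchange_big /=; congr (_ * _); apply: eq_bigr => i _.
by rewrite rmorph_sum mulr_sumr.
Qed.

Hypotheses (gam_cont : forall i, continuous (gam i)) (phi_cont : continuous phi)
  (phi_gam : forall i x, phi (gam i x) = x)
  (gam_cover : [set: K] = \bigcup_(i in [set: 'I_n]) (gam i @` [set: K])).

Lemma exists_gam_phi x : exists j, gam j (phi x) = x.
Proof.
have : [set: K] x by [].
by rewrite gam_cover => -[j _ [y _ <-]]; exists j; rewrite phi_gam.
Qed.

Lemma gam_phi_inj x i j : ~ B_gamma gam x ->
  gam i (phi x) = x -> gam j (phi x) = x -> i = j.
Proof.
move=> xNB gix gjx; apply/eqP/negPn/negP => ij.
by apply: xNB; exists (phi x), i, j.
Qed.

Lemma B_gamma_separation (S : set K) : compact S -> S `<=` ~` B_gamma gam ->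
  exists2 e, 0 < e & forall i x, S x -> gam i (phi x) != x ->
    e <= mdist x (gam i (phi x)).
Proof.
move=> cS SNB.
pose G (ij : 'I_n * 'I_n) x :=
  mdist x (gam ij.1 (phi x)) + mdist x (gam ij.2 (phi x)).
have [e e_gt0 le_e_G] : exists2 e, 0 < e &
    forall ij x, ij.1 != ij.2 -> S x -> e <= G ij x.
  apply: compact_continuous_gt0_lbound => // [ij _ x|[i j] x /= ij Sx].
    have d_cont k : continuous (fun y => mdist y (gam k (phi y))).
      apply: continuous_mdist => y; first exact: cvg_id.
      by apply: continuous_comp; [exact: phi_cont | exact: gam_cont].
    exact: continuousD (d_cont ij.1 x) (d_cont ij.2 x).
  rewrite lt_neqAle addr_ge0 ?mdist_ge0 // andbT eq_sym paddr_eq0 ?mdist_ge0 //.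
  apply/negP => /andP[/eqP/mdist_positivity gix /eqP/mdist_positivity gjx].
  by apply: (SNB x Sx); exists (phi x), i, j.
exists e => // i x Sx gix; have [j gjx] := exists_gam_phi x.
have ij : i != j by apply: contra_neq gix => ->.
by have := le_e_G (i, j) x ij Sx; rewrite /G /= gjx mdistxx addr0.
Qed.

End self_similar.

Theorem lemma4p3 (R : realType) (K : metricType R) (n : nat)
  (gam : 'I_n -> K -> K) (phi : K -> K)
  (hK : compact [set: K])
  (hgam : forall i, proper_contraction (gam i))
  (hcover : [set: K] = \bigcup_(i in [set: 'I_n]) (gam i @` [set: K]))
  (hphi : continuous phi)
  (hphigam : forall i x, phi (gam i x) = x)
  (hosc : open_set_condition gam)
  (a : K -> R[i]) (ha : J0 gam a) :
  exists m : nat, (0 < m)%N /\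
    exists xi eta : 'I_m -> K -> R[i],
      (forall k, contC (xi k) /\ contC (eta k)) /\
      forall zeta : K -> R[i], contC zeta ->
        (fun x => \sum_(k < m) theta gam phi (xi k) (eta k) zeta x) = lactX a zeta.
Proof.
have [[x0 _]|K_empty] := pselect ([set: K] !=set0); last first.
  exists 1%N; split => //; exists (fun _ _ => 0), (fun _ _ => 0).
  split=> [k|zeta _]; first by split; apply: contC_real; exact: cst_continuous.
  by apply: boolp.funext => x; case: K_empty; exists x.
have gam_cont i : continuous (gam i) by case: (hgam i).
have [j0 _] := exists_gam_phi hphigam hcover x0.
have n_gt0 : (0 < n)%N := leq_ltn_trans (leq0n j0) (ltn_ord j0).
case: ha => a_cont _ supp_compact supp_NB.
have [e e_gt0 e_sep] :=
  B_gamma_separation gam_cont hphi hphigam hcover supp_compact supp_NB.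
have r_gt0 : 0 < e / 3 by rewrite divr_gt0.
have [m [c c_net]] := compact_ball_net r_gt0 hK.
have [p [g [p_cont g_cont pg_diag pg_offdiag]]] :=
  localizing_partition_of_unity r_gt0 c_net.
have [k0 _] := c_net x0.
exists m; split; first exact: leq_ltn_trans (ltn_ord k0).
exists (fun k x => a x * (n%:R * p k x)%:C), (fun k y => (g k y)%:C); split.
  move=> k; split; last exact: contC_real.
  apply: contC_mul_real => // x.
  exact: continuousM (@cst_continuous _ _ (n%:R : R) x) (p_cont k x).
move=> zeta _; apply: boolp.funext => x; rewrite sum_theta_real // /lactX.
have [->|ax_neq0] := eqVneq (a x) 0; first by rewrite !mul0r.
have supp_x : supp a x by apply: subset_closure.
have [j gjx] := exists_gam_phi hphigam hcover x.
congr (_ * _); rewrite (bigD1 j) //= gjx pg_diag mulr1 big1 ?addr0 // => i ij.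
rewrite pg_offdiag ?mulr0 // mulrC divfK ?pnatr_eq0 //.
apply: e_sep => //; apply: contra_neq ij => gix.
exact: gam_phi_inj (supp_NB x supp_x) gix gjx.
Qed.
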